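(* Let $B_J=L+U\in\mathbb R^{n\times n}$ with $L$ strictly lower triangular, $U$ strictly upper triangular, and let $c\in\mathbb R^n$. Let $y^{(0)}\in\mathbb R^n$ and $y^{(k+1)}=(I-U)^{-1}(Ly^{(k)}+c)$ for $k\ge0$ (backward Gauss–Seidel). Consider the FUTC scheme: given $x^{(0)}_1,\dots,x^{(0)}_{n-1}\in\mathbb R^n$ arbitrary and $x^{(0)}_n=y^{(0)}$, for $k\ge0$ and $i=1,\dots,n$, $$x^{(k+1)}_i=\sum_{m=1}^{i-1}U^{(n+1-m)}_c x^{(k+1)}_m+\sum_{m=i}^{n-1}U^{(n+1-m)}_c x^{(k)}_m+Lx^{(k)}_n+c.$$ Then $x^{(k)}_n=y^{(k)}$ for all $k\ge0$, independently of $x^{(0)}_1,\dots,x^{(0)}_{n-1}$.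
   Context: For $j\in\{2,\dots,n\}$, $U^{(j)}_c$ is the $n\times n$ matrix whose $j$-th column agrees with the $j$-th column of $U$ in rows $i\le j-1$ and which is zero elsewhere (the $j$-th column of $U$). Empty sums are zero. *)

From HB Require Import structures.
From mathcomp Require Import all_boot all_order all_algebra.
From mathcomp Require Import reals.
Set Implicit Arguments. Unset Strict Implicit. Unset Printing Implicit Defensive.
Import Order.TTheory GRing.Theory Num.Theory.
Local Open Scope ring_scope.

(* Indices in the paper are 1-based; matrix entries use 0-based ordinals.
   Entry (r, s) of a matrix corresponds to paper entry (r+1, s+1). *)

Definition strictly_lower (R : ringType) (n : nat) (A : 'M[R]_n) : Prop :=
  forall i j : 'I_n, (i <= j)%N -> A i j = 0.

Definition strictly_upper (R : ringType) (n : nat) (A : 'M[R]_n) : Prop :=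
  forall i j : 'I_n, (j <= i)%N -> A i j = 0.

Definition Ucol (R : ringType) (n : nat) (U : 'M[R]_n) (j : nat) : 'M[R]_n :=
  \matrix_(r, s) (if ((s.+1 == j) && (r.+1 <= j - 1))%N then U r s else 0).

From HB Require Import structures.
From mathcomp Require Import all_boot all_order all_algebra.
From mathcomp Require Import reals zify.
Import Order.TTheory GRing.Theory Num.Theory.
Local Open Scope ring_scope.

(* U^{(n+1-m)}_c only reads row n-m of its argument and only writes rows above
   it, so in one FUTC sweep row n-m of x_m^{(k+1)} is already the final row n-m
   of x_n^{(k+1)}.  Hence the last vector of the sweep satisfies
   x_n^{(k+1)} = U x_n^{(k+1)} + L x_n^{(k)} + c, which is one step of
   backward Gauss–Seidel. *)

Lemma unitmx_1_sub_strictly_upper (R : comUnitRingType) n (U : 'M[R]_n) :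
  strictly_upper U -> (1%:M - U) \in unitmx.
Proof.
move=> hU; rewrite unitmxE -det_tr det_trig.
  by rewrite big1 ?unitr1 // => i _; rewrite !mxE eqxx hU // subr0.
apply/is_trig_mxP => i j lij; rewrite !mxE hU; last exact: ltnW.
by rewrite subr0; case: eqP lij => // ->; rewrite ltnn.
Qed.

Section UcolSweep.

Variables (R : nzRingType) (n : nat) (U : 'M[R]_n).

Lemma eq_Ucol_mulmx j (a b : 'cV[R]_n) :
  (forall t : 'I_n, t.+1 = j -> a t 0 = b t 0) ->
  Ucol U j *m a = Ucol U j *m b.
Proof.
move=> eq_ab; apply/matrixP => r s; rewrite (ord1 s) !mxE.
apply: eq_bigr => t _; rewrite !mxE.
by case: ifP => [/andP[/eqP /eq_ab -> _]|_]; rewrite ?mul0r.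
Qed.

Lemma sum_Ucol_mulmx_row_eq0 (a : nat -> 'cV[R]_n) m p (t : 'I_n) :
  (n <= t + m)%N -> (\sum_(m <= i < p) Ucol U (n.+1 - i) *m a i) t 0 = 0.
Proof.
move=> le_n_tm; rewrite summxE big_nat big1 // => i /andP[le_mi _].
rewrite mxE big1 // => s _; rewrite mxE.
case: ifP => [/andP[_ lt_t]|_]; last by rewrite mul0r.
by exfalso; move: lt_t; lia.
Qed.

Lemma sum_Ucol_strictly_upper :
  strictly_upper U -> \sum_(1 <= m < n) Ucol U (n.+1 - m) = U.
Proof.
move=> hU; apply/matrixP => r s; rewrite summxE.
have [lt_rs|le_sr] := ltnP r s; last first.
  by rewrite hU // big1 // => m _; rewrite mxE hU //; case: ifP.
have lt_sn := ltn_ord s.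
have ns_in : (n - s)%N \in index_iota 1 n by rewrite mem_index_iota; lia.
rewrite (bigD1_seq (n - s)%N) ?iota_uniq //= mxE.
have -> : ((s.+1 == n.+1 - (n - s)) && (r.+1 <= n.+1 - (n - s) - 1))%N.
  by apply/andP; split; [apply/eqP|]; lia.
rewrite big_seq_cond big1 ?addr0 // => m /andP[_ ne_m]; rewrite mxE.
by case: ifP => // /andP[/eqP eq_s _]; move/eqP: ne_m; lia.
Qed.

(* One FUTC sweep: [z] are the new iterates, [w] the old ones and [b] the
   constant term [L x_n^{(k)} + c]. *)
Variables (z w : nat -> 'cV[R]_n) (b : 'cV[R]_n).
Hypothesis sweep : forall i, (1 <= i <= n)%N ->
  z i = \sum_(1 <= m < i) Ucol U (n.+1 - m) *m z m
      + \sum_(i <= m < n) Ucol U (n.+1 - m) *m w m + b.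

Lemma sweep_row_eq m (t : 'I_n) :
  (1 <= m < n)%N -> t.+1 = (n.+1 - m)%N -> z m t 0 = z n t 0.
Proof.
move=> /andP[ge_m1 lt_mn] eq_t.
have tail0 (a : nat -> 'cV[R]_n) :
    (\sum_(m <= i < n) Ucol U (n.+1 - i) *m a i) t 0 = 0.
  by apply: sum_Ucol_mulmx_row_eq0; lia.
have le_mn := ltnW lt_mn; have ge_n1 := leq_trans ge_m1 le_mn.
rewrite [z n]sweep ?ge_n1 ?leqnn // [X in _ + X + b]big_geq // addr0.
rewrite (big_cat_nat _ (n := m)) //= [z m]sweep ?ge_m1 //.
by rewrite !mxE !tail0 addr0.
Qed.

Lemma sweep_last : strictly_upper U -> (1%:M - U) *m z n = b.
Proof.
move=> hU; have [n0|n_gt0] := posnP n.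
  by apply/matrixP => t; have := ltn_ord t; rewrite {2}n0.
have := sweep n; rewrite n_gt0 leqnn (big_geq (m := n)) // addr0 => /(_ isT) last_eq.
have U_last : U *m z n = \sum_(1 <= m < n) Ucol U (n.+1 - m) *m z m.
  rewrite -{1}(sum_Ucol_strictly_upper hU) mulmx_suml.
  by apply: eq_big_nat => m range_m; apply: eq_Ucol_mulmx => t /sweep_row_eq ->.
by rewrite mulmxBl mul1mx U_last {1}last_eq addrAC subrr add0r.
Qed.

End UcolSweep.

Theorem theorem6p2 (R : realType) (n : nat) (L U : 'M[R]_n) (c : 'cV[R]_n)
  (y : nat -> 'cV[R]_n) (x : nat -> nat -> 'cV[R]_n) :
  strictly_lower L -> strictly_upper U ->
  (forall k, y k.+1 = invmx (1%:M - U) *m (L *m y k + c)) ->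
  x 0%N n = y 0%N ->
  (forall k i, (1 <= i <= n)%N ->
     x k.+1 i = \sum_(1 <= m < i) Ucol U (n.+1 - m) *m x k.+1 m
              + \sum_(i <= m < n) Ucol U (n.+1 - m) *m x k m
              + L *m x k n + c) ->
  forall k, x k n = y k.
Proof.
move=> _ hU hy x0 futc; elim=> [//|k IH].
have gs_step : (1%:M - U) *m x k.+1 n = L *m x k n + c.
  by apply: (@sweep_last _ _ _ _ (x k)) hU => i range_i; rewrite futc // addrA.
by rewrite hy -IH -gs_step mulKmx // unitmx_1_sub_strictly_upper.
Qed.
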